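(* Let $d$ be a homogeneous distance on $\mathbb H$ with closed unit ball $B$ centered at $0$, and let $S^+=\partial B\cap\{p: z_p>0\}$. Assume there exist sequences $p_n^-=(x_n^-,0,z_n^-)\in S^+$, $p_n^+=(x_n^+,0,z_n^+)\in S^+$ and constants $a>0$, $\bar x>0$ such that for all $n$: $x_n^-<0<x_n^+$; $z_n^->z_n^+>0$; $z_n^+-z_n^-<-a(x_n^+-x_n^-)$; $\{p\in\mathbb H: x_n^+\le x_p\le\bar x,\ y_p=0,\ z_p>z_n^+\}\subset\mathbb H\setminus B$; and $x_n^+-x_n^-\to0$ as $n\to\infty$. Then BCP does not hold in $(\mathbb H,d)$.
   Context: $\mathbb H=\mathbb R^3$, points $p=(x_p,y_p,z_p)$, group law $(x,y,z)\cdot(x',y',z')=(x+x',y+y',z+z'+\tfrac12(xy'-yx'))$, dilations $\delta_\lambda(x,y,z)=(\lambda x,\lambda y,\lambda^2z)$. A distance is homogeneous if it induces the Euclidean topology, is left invariant and satisfies $d(\delta_\lambda p,\delta_\lambda q)=\lambda d(p,q)$. BCP holds for $d$ if there is $N\geq1$ such that for every bounded $A$ and every family $\mathcal B$ of closed balls with each point of $A$ the center of some ball of $\mathcal B$, some subfamily $\mathcal F\subset\mathcal B$ satisfies $\chi_A\le\sum_{B\in\mathcal F}\chi_B\le N$. *)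

From Stdlib Require Import Reals Lra List.
Open Scope R_scope.

Definition H : Type := (R * R * R)%type.
Definition xc (p : H) : R := fst (fst p).
Definition yc (p : H) : R := snd (fst p).
Definition zc (p : H) : R := snd p.
Definition mkH (x y z : R) : H := (x, y, z).
Definition H0 : H := mkH 0 0 0.

Definition hmul (p q : H) : H :=
  mkH (xc p + xc q) (yc p + yc q)
      (zc p + zc q + / 2 * (xc p * yc q - yc p * xc q)).

Definition dil (l : R) (p : H) : H := mkH (l * xc p) (l * yc p) (l * l * zc p).

Definition eucl (p q : H) : R :=
  sqrt ((xc p - xc q)^2 + (yc p - yc q)^2 + (zc p - zc q)^2).

Definition open_for (dist : H -> H -> R) (U : H -> Prop) : Prop :=
  forall p, U p -> exists eps, eps > 0 /\ forall q, dist p q < eps -> U q.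

Definition is_metric (d : H -> H -> R) : Prop :=
  (forall p q, 0 <= d p q) /\
  (forall p q, d p q = 0 <-> p = q) /\
  (forall p q, d p q = d q p) /\
  (forall p q r, d p r <= d p q + d q r).

Definition homogeneous_distance (d : H -> H -> R) : Prop :=
  is_metric d /\
  (forall U : H -> Prop, open_for d U <-> open_for eucl U) /\
  (forall g p q, d (hmul g p) (hmul g q) = d p q) /\
  (forall l p q, l > 0 -> d (dil l p) (dil l q) = l * d p q).

Definition closed_ball (d : H -> H -> R) (c : H) (r : R) : H -> Prop :=
  fun q => d c q <= r.

Definition boundary (S : H -> Prop) : H -> Prop :=
  fun p => forall eps, eps > 0 ->
    (exists q, eucl p q < eps /\ S q) /\ (exists q, eucl p q < eps /\ ~ S q).

Definition bounded_for (d : H -> H -> R) (A : H -> Prop) : Prop :=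
  exists R0, forall p, A p -> d H0 p <= R0.

Definition family_of_closed_balls (d : H -> H -> R) (Bf : (H -> Prop) -> Prop) : Prop :=
  forall b, Bf b -> exists c r, r > 0 /\ b = closed_ball d c r.

Definition BCP (d : H -> H -> R) : Prop :=
  exists N : nat, (1 <= N)%nat /\
    forall (A : H -> Prop) (Bf : (H -> Prop) -> Prop),
      bounded_for d A ->
      family_of_closed_balls d Bf ->
      (forall a, A a -> exists r, r > 0 /\ Bf (closed_ball d a r)) ->
      exists Ff : (H -> Prop) -> Prop,
        (forall b, Ff b -> Bf b) /\
        (* chi_A <= sum_{B in F} chi_B *)
        (forall a, A a -> exists b, Ff b /\ b a) /\
        (* sum_{B in F} chi_B <= N : no point lies in N+1 distinct members of F *)
        (forall p (l : list (H -> Prop)), NoDup l ->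
           (forall b, In b l -> Ff b /\ b p) -> (length l <= N)%nat).

From Stdlib Require Import Reals Lra Lia List.
Open Scope R_scope.

(* Put [p_n := (x_n^-, 0, z_n^-)] and consider the balls of radius [r]
   centred at [delta_r (p_n^-1)]; each of them has the origin on its boundary.
   Rescaling by [delta_r], the centre of a smaller such ball [delta_s (p_j^-1)],
   seen from the larger one, becomes [p_n * delta_(s/r) (p_j^-1)], a point of the
   plane [y = 0] lying just above the level [z_n^+] and to the right of [x_n^+]
   as soon as [x_n^+ - x_n^-] is small; by hypothesis it is outside [B].  So
   choosing [n] with [x_n^+ - x_n^-] tiny and [r] huge, one can add to any finite
   family of such balls a new one whose centre lies in no old ball and which
   contains no old centre.  This yields, for every [N], [N] balls containing the
   origin, none containing the centre of another; the only subfamily covering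
   the centres is the whole family, which contradicts BCP. *)

Lemma H_ext (p q : H) : xc p = xc q -> yc p = yc q -> zc p = zc q -> p = q.
Proof.
  destruct p as [[x y] z], q as [[x' y'] z']; unfold xc, yc, zc; simpl.
  intros -> -> ->; reflexivity.
Qed.

Ltac heis_ring :=
  apply H_ext; unfold hmul, dil, mkH, H0, xc, yc, zc; simpl; field.

Definition hinv (p : H) : H := mkH (- xc p) (- yc p) (- zc p).

Lemma hmul_hinv_l (p : H) : hmul (hinv p) p = H0.
Proof. unfold hinv; heis_ring. Qed.

Lemma hmul_H0_r (p : H) : hmul p H0 = p.
Proof. heis_ring. Qed.

Lemma hinvK (p : H) : hinv (hinv p) = p.
Proof. unfold hinv; heis_ring. Qed.

Lemma dil_H0 (r : R) : dil r H0 = H0.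
Proof. heis_ring. Qed.

Lemma dil_mul (s t : R) (p : H) : dil (s * t) p = dil s (dil t p).
Proof. heis_ring. Qed.

Lemma finite_upper_bound (f : nat -> R) (N : nat) :
  exists M, 0 < M /\ forall k, (k < N)%nat -> f k <= M.
Proof.
  induction N as [|N (M & HM & Hbound)].
  - exists 1; split; [lra | intros k Hk; lia].
  - exists (Rmax M (f N)); split.
    + eapply Rlt_le_trans; [exact HM | apply Rmax_l].
    + intros k Hk; destruct (Nat.eq_dec k N) as [-> | Hne]; [apply Rmax_r|].
      eapply Rle_trans; [apply Hbound; lia | apply Rmax_l].
Qed.

Lemma finite_lower_bound (f : nat -> R) (N : nat) :
  (forall k, (k < N)%nat -> 0 < f k) ->
  exists m, 0 < m /\ forall k, (k < N)%nat -> m <= f k.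
Proof.
  induction N as [|N IH]; intros Hpos.
  - exists 1; split; [lra | intros k Hk; lia].
  - destruct IH as (m & Hm & Hbound); [intros k Hk; apply Hpos; lia|].
    exists (Rmin m (f N)); split.
    + apply Rmin_pos; [exact Hm | apply Hpos; lia].
    + intros k Hk; destruct (Nat.eq_dec k N) as [-> | Hne]; [apply Rmin_r|].
      eapply Rle_trans; [apply Rmin_l | apply Hbound; lia].
Qed.

Lemma Rmult_lt_of_lt_div (x y c : R) : 0 < c -> x < y / c -> x * c < y.
Proof.
  intros Hc Hx; apply (Rmult_lt_compat_r c) in Hx; [|exact Hc].
  replace (y / c * c) with y in Hx by (field; lra); exact Hx.
Qed.

Section MetricBalls.

Variable d : H -> H -> R.
Hypothesis d_metric : is_metric d.

Lemma open_for_dist_lt (c : H) (r : R) : open_for d (fun q => d c q < r).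
Proof.
  destruct d_metric as (_ & _ & _ & d_tri).
  intros q Hq; exists (r - d c q); split; [lra|].
  intros q' Hq'; pose proof (d_tri c q q'); lra.
Qed.

Lemma open_for_dist_gt (c : H) (r : R) : open_for d (fun q => r < d c q).
Proof.
  destruct d_metric as (_ & _ & d_sym & d_tri).
  intros q Hq; exists (d c q - r); split; [lra|].
  intros q' Hq'; pose proof (d_tri c q' q); rewrite (d_sym q' q) in *; lra.
Qed.

Lemma boundary_closed_ball (c : H) (r : R) (p : H) :
  (forall U, open_for d U -> open_for eucl U) ->
  boundary (closed_ball d c r) p -> d c p = r.
Proof.
  intros d_open_eucl Hb; unfold closed_ball in Hb.
  destruct (Rtotal_order (d c p) r) as [Hlt | [Heq | Hgt]]; [exfalso | exact Heq | exfalso].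
  - destruct (d_open_eucl _ (open_for_dist_lt c r) p Hlt) as (e & He & Hnear).
    destruct (Hb e He) as [_ (q & Hq & Hout)].
    specialize (Hnear q Hq); lra.
  - destruct (d_open_eucl _ (open_for_dist_gt c r) p Hgt) as (e & He & Hnear).
    destruct (Hb e He) as [(q & Hq & Hin) _].
    specialize (Hnear q Hq); lra.
Qed.

Definition separated_balls (N : nat) (c : nat -> H) (r : nat -> R) : Prop :=
  (forall k, (k < N)%nat -> 0 < r k) /\
  (forall k l, (k < N)%nat -> (l < N)%nat -> k <> l -> r l < d (c l) (c k)).

(* In a separated family the ball around [c k] is the only one covering [c k],
   so a covering subfamily must keep all [N] balls. *)
Lemma not_BCP_of_separated_balls :
  (forall N, exists c r p, separated_balls N c r /\
     forall k, (k < N)%nat -> d (c k) p <= r k) ->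
  ~ BCP d.
Proof.
  destruct d_metric as (_ & d_zero & _ & _).
  intros Hfam (N0 & _ & HBCP).
  destruct (Hfam (S N0)) as (c & r & p & (r_pos & Hsep) & Hcommon).
  set (ball k := closed_ball d (c k) (r k)).
  assert (ball_center : forall k, (k < S N0)%nat -> ball k (c k)).
  { intros k Hk; unfold ball, closed_ball.
    rewrite (proj2 (d_zero _ _) eq_refl); apply Rlt_le, r_pos, Hk. }
  assert (ball_center_unique : forall k l, (k < S N0)%nat -> (l < S N0)%nat ->
            ball l (c k) -> k = l).
  { intros k l Hk Hl Hin; destruct (Nat.eq_dec k l) as [-> | Hne]; [reflexivity|].
    specialize (Hsep k l Hk Hl Hne); unfold ball, closed_ball in Hin; lra. }
  destruct (HBCP (fun q => exists k, (k < S N0)%nat /\ q = c k)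
                 (fun b => exists k, (k < S N0)%nat /\ b = ball k))
    as (F & F_sub & F_cover & F_mult).
  - destruct (finite_upper_bound (fun k => d H0 (c k)) (S N0)) as (M & _ & HM).
    exists M; intros q (k & Hk & ->); apply HM, Hk.
  - intros b (k & Hk & ->); exists (c k), (r k); split; [apply r_pos, Hk | reflexivity].
  - intros q (k & Hk & ->); exists (r k); split; [apply r_pos, Hk|].
    exists k; split; [exact Hk | reflexivity].
  - assert (ball_in_F : forall k, (k < S N0)%nat -> F (ball k)).
    { intros k Hk.
      destruct (F_cover (c k)) as (b & Fb & Hb); [exists k; split; [exact Hk | reflexivity]|].
      destruct (F_sub b Fb) as (l & Hl & ->).
      rewrite (ball_center_unique k l Hk Hl Hb); exact Fb. }
    assert (Hlen := F_mult p (map ball (seq 0 (S N0)))).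
    rewrite length_map, length_seq in Hlen.
    enough (S N0 <= N0)%nat by lia.
    apply Hlen.
    + apply NoDup_map_NoDup_ForallPairs; [|apply seq_NoDup].
      intros k l Hk Hl Heq; apply in_seq in Hk, Hl.
      apply ball_center_unique; try lia.
      rewrite <- Heq; apply ball_center; lia.
    + intros b Hb; apply in_map_iff in Hb; destruct Hb as (k & <- & Hk).
      apply in_seq in Hk; split; [apply ball_in_F; lia | apply Hcommon; lia].
Qed.

End MetricBalls.

Section HomogeneousDistance.

Variable d : H -> H -> R.
Hypothesis d_left_inv : forall g p q, d (hmul g p) (hmul g q) = d p q.
Hypothesis d_hom : forall l p q, l > 0 -> d (dil l p) (dil l q) = l * d p q.

Lemma dist_to_origin (p q : H) : d p q = d H0 (hmul (hinv p) q).
Proof. rewrite <- (d_left_inv (hinv p) p q), hmul_hinv_l; reflexivity. Qed.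

Lemma dist_dil_hinv_origin (r : R) (p : H) : 0 < r -> d (dil r (hinv p)) H0 = r * d H0 p.
Proof.
  intros Hr; rewrite <- (dil_H0 r) at 1; rewrite d_hom by lra.
  rewrite dist_to_origin, hinvK, hmul_H0_r; reflexivity.
Qed.

Lemma dist_dil_hinv (r s : R) (p q : H) : 0 < r -> 0 < s ->
  d (dil r (hinv p)) (dil s (hinv q)) = r * d H0 (hmul p (dil (s / r) (hinv q))).
Proof.
  intros Hr Hs.
  replace s with (r * (s / r)) at 1 by (field; lra).
  rewrite dil_mul, d_hom, dist_to_origin, hinvK by lra; reflexivity.
Qed.

End HomogeneousDistance.

Section Construction.

Variable d : H -> H -> R.
Hypothesis d_metric : is_metric d.
Hypothesis d_left_inv : forall g p q, d (hmul g p) (hmul g q) = d p q.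
Hypothesis d_hom : forall l p q, l > 0 -> d (dil l p) (dil l q) = l * d p q.

Variables (xm zm xp zp : nat -> R) (a xbar : R).
Hypothesis a_pos : 0 < a.
Hypothesis xbar_pos : 0 < xbar.
Hypothesis pm_on_sphere : forall n, d H0 (mkH (xm n) 0 (zm n)) = 1.
Hypothesis xm_neg_xp_pos : forall n, xm n < 0 < xp n.
Hypothesis slope : forall n, zp n - zm n < - a * (xp n - xm n).
Hypothesis outside_unit_ball : forall n p,
  xp n <= xc p <= xbar -> yc p = 0 -> zc p > zp n -> 1 < d H0 p.
Hypothesis width_small : forall eps, 0 < eps -> exists n, xp n - xm n < eps.

Definition center (r : R) (n : nat) : H := dil r (hinv (mkH (xm n) 0 (zm n))).

Lemma center_dist_origin (r : R) (n : nat) : 0 < r -> d (center r n) H0 = r.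
Proof. intros Hr; unfold center; rewrite dist_dil_hinv_origin, pm_on_sphere; auto; ring. Qed.

Lemma center_outside_smaller_ball (r s : R) (n j : nat) :
  0 < s -> 2 * s < r -> s < d (center s j) (center r n).
Proof.
  destruct d_metric as (_ & _ & d_sym & d_tri); intros Hs Hsr.
  pose proof (d_tri (center r n) (center s j) H0) as Htri.
  rewrite !center_dist_origin, d_sym in Htri by lra; lra.
Qed.

(* After rescaling by [1/r], the smaller centre seen from [center r n] is
   [p_n * delta_t (p_j^-1)] with [t = s/r]: a point of the plane [y = 0] that the
   three inequalities place in the region known to avoid the unit ball. *)
Lemma center_outside_larger_ball (r s : R) (n j : nat) : 0 < r -> 0 < s ->
  (xp n - xm n) * r <= s * - xm j -> s * - xm j <= xbar * r ->
  s * s * zm j <= a * (xp n - xm n) * r * r ->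
  r < d (center r n) (center s j).
Proof.
  intros Hr Hs Hleft Hright Hheight; unfold center.
  rewrite dist_dil_hinv by assumption.
  set (t := s / r).
  assert (Ht : s = t * r) by (unfold t; field; lra).
  rewrite Ht in Hleft, Hright, Hheight.
  assert (Hheight' : t * t * zm j <= a * (xp n - xm n))
    by (apply (Rmult_le_reg_r (r * r)); nra).
  replace (hmul (mkH (xm n) 0 (zm n)) (dil t (hinv (mkH (xm j) 0 (zm j)))))
    with (mkH (xm n + t * - xm j) 0 (zm n - t * t * zm j)) by (unfold hinv; heis_ring).
  enough (1 < d H0 (mkH (xm n + t * - xm j) 0 (zm n - t * t * zm j))) by nra.
  pose proof (xm_neg_xp_pos n); pose proof (slope n).
  apply (outside_unit_ball n); unfold xc, yc, zc, mkH; simpl; [split | reflexivity |]; nra.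
Qed.

Lemma separated_extension (N : nat) (r : nat -> R) (nn : nat -> nat) :
  (forall k, (k < N)%nat -> 0 < r k) ->
  exists ri n, 0 < ri /\ forall k, (k < N)%nat ->
    r k < d (center (r k) (nn k)) (center ri n) /\
    ri < d (center ri n) (center (r k) (nn k)).
Proof.
  intros r_pos.
  destruct (finite_lower_bound (fun k => r k * - xm (nn k)) N) as (m & Hm & m_low).
  { intros k Hk; pose proof (xm_neg_xp_pos (nn k)); pose proof (r_pos k Hk); nra. }
  destruct (finite_upper_bound r N) as (Rr & HRr & Rr_up).
  destruct (finite_upper_bound (fun k => r k * - xm (nn k)) N) as (P & HP & P_up).
  destruct (finite_upper_bound (fun k => r k * r k * zm (nn k)) N) as (Q & HQ & Q_up).
  destruct (width_small (Rmin (Rmin (m / (2 * Rr)) (m * xbar / P)) (a * m * m / Q)))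
    as (n & Hn).
  { repeat apply Rmin_pos; apply Rdiv_lt_0_compat; try nra.
    apply Rmult_lt_0_compat; nra. }
  set (w := xp n - xm n) in *.
  assert (Hw : 0 < w) by (pose proof (xm_neg_xp_pos n); unfold w; lra).
  assert (w_lt_R : w * (2 * Rr) < m).
  { apply Rmult_lt_of_lt_div; [lra|].
    eapply Rlt_le_trans; [exact Hn | eapply Rle_trans; apply Rmin_l]. }
  assert (w_lt_P : w * P < m * xbar).
  { apply Rmult_lt_of_lt_div; [lra|].
    eapply Rlt_le_trans; [exact Hn | eapply Rle_trans; [apply Rmin_l | apply Rmin_r]]. }
  assert (w_lt_Q : w * Q < a * m * m).
  { apply Rmult_lt_of_lt_div; [lra|].
    eapply Rlt_le_trans; [exact Hn | apply Rmin_r]. }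
  exists (m / w), n.
  assert (Hri : w * (m / w) = m) by (field; lra).
  split; [apply Rdiv_lt_0_compat; lra|].
  intros k Hk.
  specialize (r_pos k Hk); specialize (m_low k Hk); specialize (Rr_up k Hk).
  specialize (P_up k Hk); specialize (Q_up k Hk); simpl in *.
  split.
  - apply center_outside_smaller_ball; [lra|].
    apply (Rmult_lt_reg_l w); nra.
  - apply center_outside_larger_ball; fold w; [apply Rdiv_lt_0_compat; lra | lra | lra | |].
    + apply (Rmult_le_reg_l w); [lra|].
      replace (w * (xbar * (m / w))) with (m * xbar) by (field; lra).
      pose proof (Rmult_le_compat_l w _ _ (Rlt_le _ _ Hw) P_up); lra.
    + apply (Rmult_le_reg_l w); [lra|].
      replace (w * (a * w * (m / w) * (m / w))) with (a * m * m) by (field; lra).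
      pose proof (Rmult_le_compat_l w _ _ (Rlt_le _ _ Hw) Q_up); lra.
Qed.

Lemma separated_centers (N : nat) :
  exists (r : nat -> R) (nn : nat -> nat),
    separated_balls d N (fun k => center (r k) (nn k)) r.
Proof.
  induction N as [|N (r & nn & r_pos & Hsep)].
  - exists (fun _ => 1), (fun _ => O); split; intros; lia.
  - destruct (separated_extension N r nn r_pos) as (ri & n & Hri & Hnew).
    exists (fun k => if Nat.eqb k N then ri else r k),
           (fun k => if Nat.eqb k N then n else nn k).
    split.
    + intros k Hk; destruct (Nat.eqb_spec k N); [exact Hri | apply r_pos; lia].
    + intros k l Hk Hl Hkl.
      destruct (Nat.eqb_spec k N), (Nat.eqb_spec l N); subst; try lia.
      * apply Hnew; lia.
      * apply Hnew; lia.
      * apply Hsep; lia.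
Qed.

Lemma not_BCP_of_region : ~ BCP d.
Proof.
  apply not_BCP_of_separated_balls; [exact d_metric|].
  intros N; destruct (separated_centers N) as (r & nn & Hsep).
  exists (fun k => center (r k) (nn k)), r, H0; split; [exact Hsep|].
  intros k Hk; rewrite center_dist_origin; [lra | apply (proj1 Hsep), Hk].
Qed.

End Construction.

Theorem theorem6p2 (d : H -> H -> R) (hd : homogeneous_distance d)
  (xm zm xp zp : nat -> R) (a xbar : R) :
  let B := closed_ball d H0 1 in
  let Splus := fun p => boundary B p /\ zc p > 0 in
  a > 0 -> xbar > 0 ->
  (forall n, Splus (mkH (xm n) 0 (zm n))) ->
  (forall n, Splus (mkH (xp n) 0 (zp n))) ->
  (forall n, xm n < 0 < xp n) ->
  (forall n, zm n > zp n /\ zp n > 0) ->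
  (forall n, zp n - zm n < - a * (xp n - xm n)) ->
  (forall n p, xp n <= xc p <= xbar -> yc p = 0 -> zc p > zp n -> ~ B p) ->
  Un_cv (fun n => xp n - xm n) 0 ->
  ~ BCP d.
Proof.
  intros B Splus ha hxbar Hm _ Hx _ Hslope Hregion Hcv.
  destruct hd as (d_metric & d_topology & d_left_inv & d_hom).
  apply (not_BCP_of_region d d_metric d_left_inv d_hom xm zm xp zp a xbar); auto.
  - intros n; apply (boundary_closed_ball d d_metric); [|apply (Hm n)].
    intros U; apply d_topology.
  - intros n p Hxp Hyp Hzp; apply Rnot_le_lt, (Hregion n p Hxp Hyp Hzp).
  - intros eps Heps; destruct (Hcv eps Heps) as (n & Hn); exists n.
    specialize (Hn n (le_n n)); unfold R_dist in Hn.
    pose proof (Rle_abs (xp n - xm n - 0)); lra.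
Qed.
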